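(* Let $\{\mathcal X^\varepsilon:\varepsilon\ge 0\}$ be a Markov perturbation of a synchronized DRN $\mathcal X^0$. Then there is $\varepsilon_1>0$ such that for every $0\le\varepsilon<\varepsilon_1$ there exists an invariant distribution $p_\varepsilon:\Omega\to\Sigma_1^+$ of $\mathcal X^\varepsilon$ (i.e. $P_{\mathcal X^\varepsilon}(1,\omega)p_\varepsilon(\omega)=p_\varepsilon(\theta\omega)$ for $\mu$-a.e. $\omega$) with the following properties: (i) $p_\varepsilon$ is pull-back attracting: for every $q\in\Sigma_1^+$ and $\mu$-a.e. $\omega$, $\lim_{n\to\infty}|P_{\mathcal X^\varepsilon}(n,\theta^{-n}\omega)q-p_\varepsilon(\omega)|=0$; (ii) $p_\varepsilon$ is forward attracting: for every $q\in\Sigma_1^+$ and $\mu$-a.e. $\omega$, $\lim_{n\to\infty}|P_{\mathcal X^\varepsilon}(n,\omega)q-p_\varepsilon(\theta^n\omega)|=0$; (iii) $p_\varepsilon$ is continuous at $\varepsilon=0$: there is an $\mathcal F$-measurable $J:\Omega\to\mathbb K$ such that for $\mu$-a.e. $\omega$, $\lim_{\varepsilon\to0}p_\varepsilon(\omega)=e_{J(\omega)}=p_0(\omega)$. Moreover, if $\mathcal X^0$ is uniformly synchronized, then the convergence in (iii) is uniform on a set of full $\mu$-measure.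
   Context: Let $k\ge2$, $S=\{s_1,\dots,s_k\}$, $\mathbb K=\{1,\dots,k\}$, $e_1,\dots,e_k$ the canonical basis of $\mathbb R^k$. $|\cdot|$ denotes the $\ell^1$-norm on $\mathbb R^k$ and the induced operator norm on $\mathbb R^{k\times k}$ (max absolute column sum). For $a\in\mathbb R$, $\Sigma_a=\{v\in\mathbb R^k:\sum_jv_j=a\}$ and $\Sigma_1^+=\{v\in\Sigma_1:v_j\ge0\ \forall j\}$. $\Theta=(\Omega,\mathcal F,\mu,\theta)$ is an invertible metric dynamical system: $(\Omega,\mathcal F,\mu)$ is a standard probability space and $\theta:\Omega\to\Omega$ is invertible, ergodic and $\mu$-preserving. A Markov random network (MRN) over $\Theta$ is a stochastic process $\mathcal X=(X_n)_{n\in\mathbb N_0}$ with state space $S\times\Omega$ such that (MRN1) $\omega\mapsto\mathbb P\{X_n=(s_i,\theta^n\omega)\mid X_0=(s_j,\omega)\}$ is $\mathcal F$-measurable for all $n,i,j$; (MRN2) $\sum_{i}\mathbb P\{X_n=(s_i,\theta^{n-m}\omega)\mid X_m=(s_j,\omega)\}=1$ for all $j$, all $n\ge m$, and $\mu$-a.e. $\omega$; (MRN3) $\mathbb P\{X_{n+1}=(s_{i_{n+1}},\theta^{n+1}\omega)\mid X_n=(s_{i_n},\theta^n\omega)\}=\mathbb P\{X_{n+1}=(s_{i_{n+1}},\theta^{n+1}\omega)\mid X_0=(s_{i_0},\omega),\dots,X_n=(s_{i_n},\theta^n\omega)\}$ for all $n$, all indices, $\mu$-a.e. $\omega$. Its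 transition cocycle is $P_{\mathcal X}(n,\omega)=(p_{i,j}(n,\omega))_{i,j\in\mathbb K}$, $p_{i,j}(n,\omega)=\mathbb P\{X_n=(s_i,\theta^n\omega)\mid X_0=(s_j,\omega)\}$; for $\mu$-a.e. $\omega$ it is column-stochastic, $P_{\mathcal X}(0,\omega)=I_k$, and $P_{\mathcal X}(m+n,\omega)=P_{\mathcal X}(m,\theta^n\omega)P_{\mathcal X}(n,\omega)$. A deterministic random network (DRN) is an MRN $\mathcal X^0$ whose transition cocycle $P^0:=P_{\mathcal X^0}$ has all entries in $\{0,1\}$ for all $n$ and $\mu$-a.e. $\omega$; it defines maps $T_{\mathcal X^0}(n,\omega):S\to S$ by $T_{\mathcal X^0}(n,\omega)(s_j)=s_i$ iff $P^0(n,\omega)_{i,j}=1$. $\mathcal X^0$ is synchronized if there is an $\mathcal F$-measurable $N:\Omega\to\mathbb N$ such that for $\mu$-a.e. $\omega$ and all $i,j$, $T_{\mathcal X^0}(n,\omega)(s_i)=T_{\mathcal X^0}(n,\omega)(s_j)$ for all $n\ge N(\omega)$; it is uniformly synchronized if such $N$ can be chosen $\mu$-a.e. constant. A Markov perturbation of a DRN $\mathcal X^0$ is a family $\{\mathcal X^\varepsilon:\varepsilon\ge0\}$ of MRNs over $\Theta$ (with $\mathcal X^\varepsilon$ at $\varepsilon=0$ being $\mathcal X^0$) such that $|P_{\mathcal X^\varepsilon}(1,\omega)-P^0(1,\omega)|\le\varepsilon$ for all $\varepsilon\ge0$ and $\mu$-a.e. $\omega$. An invariant distribution of an MRN $\mathcal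 X$ is an $\mathcal F$-measurable $p:\Omega\to\Sigma_1^+$ with $P_{\mathcal X}(n,\omega)p(\omega)=p(\theta^n\omega)$ for all $n\in\mathbb N_0$ and $\mu$-a.e. $\omega$. *)

From HB Require Import structures.
From mathcomp Require Import all_boot all_order all_algebra.
From mathcomp Require Import all_classical all_reals all_analysis.

Set Implicit Arguments.
Unset Strict Implicit.
Unset Printing Implicit Defensive.

Import Order.TTheory GRing.Theory Num.Theory.
Import numFieldNormedType.Exports.
Local Open Scope classical_set_scope.
Local Open Scope ring_scope.

Section MRN.
Variable R : realType.

Definition norm1 {k : nat} (v : 'cV[R]_k) : R := \sum_(i < k) `|v i 0|.

Definition opnorm1 {k : nat} (A : 'M[R]_k) : R :=
  \big[Num.max/0]_(j < k) \sum_(i < k) `|A i j|.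

Definition evec {k : nat} (j : 'I_k) : 'cV[R]_k := \col_i (if i == j then 1 else 0).

Definition Sigma1p {k : nat} (v : 'cV[R]_k) : Prop :=
  \sum_(i < k) v i 0 = 1 /\ forall i, 0 <= v i 0.

Definition column_stochastic {k : nat} (A : 'M[R]_k) : Prop :=
  (forall i j, 0 <= A i j) /\ (forall j, \sum_(i < k) A i j = 1).

Context {d : measure_display} {Omega : measurableType d}.

(* standard Borel space: Borel-isomorphic to a Borel subset of the reals *)
Definition standard_borel : Prop :=
  exists f : Omega -> R, injective f /\ measurable_fun setT f /\
    measurable (range f) /\ (forall A, measurable A -> measurable (f @` A)).

Definition metric_dynamical_system (mu : probability Omega R)
  (theta theta_inv : Omega -> Omega) : Prop :=
  [/\ measurable_fun setT theta, measurable_fun setT theta_inv,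
      cancel theta theta_inv /\ cancel theta_inv theta,
      (forall A, measurable A -> mu (theta @^-1` A) = mu A) &
      (forall A, measurable A -> theta @^-1` A = A ->
         mu A = 0%E \/ mu A = 1%E)].

(* transition cocycle of a Markov random network over (mu, theta):
   P n w i j = Prob{X_n = (s_i, theta^n w) | X_0 = (s_j, w)} *)
Definition MRN_cocycle {k : nat} (mu : probability Omega R)
  (theta : Omega -> Omega) (P : nat -> Omega -> 'M[R]_k) : Prop :=
  (forall n i j, measurable_fun setT (fun w => P n w i j)) /\
  {ae mu, forall w, [/\ forall n, column_stochastic (P n w),
                       P 0%N w = 1%:M &
                       forall m n, P (m + n)%N w = P m (iter n theta w) *m P n w]}.

Definition DRN_cocycle {k : nat} (mu : probability Omega R)
  (theta : Omega -> Omega) (P : nat -> Omega -> 'M[R]_k) : Prop :=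
  MRN_cocycle mu theta P /\
  {ae mu, forall w, forall n i j, P n w i j = 0 \/ P n w i j = 1}.

Definition DRN_map {k : nat} (P : nat -> Omega -> 'M[R]_k)
  (n : nat) (w : Omega) (j : 'I_k) : 'I_k :=
  odflt j [pick i | P n w i j == 1].

Definition synchronized {k : nat} (mu : probability Omega R)
  (P : nat -> Omega -> 'M[R]_k) : Prop :=
  exists N : Omega -> nat, (forall m, measurable (N @^-1` [set m])) /\
    {ae mu, forall w, forall i j n, (N w <= n)%N ->
              DRN_map P n w i = DRN_map P n w j}.

Definition uniformly_synchronized {k : nat} (mu : probability Omega R)
  (P : nat -> Omega -> 'M[R]_k) : Prop :=
  exists N : nat,
    {ae mu, forall w, forall i j n, (N <= n)%N ->
              DRN_map P n w i = DRN_map P n w j}.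

Definition markov_perturbation {k : nat} (mu : probability Omega R)
  (theta : Omega -> Omega) (P0 : nat -> Omega -> 'M[R]_k)
  (P : R -> nat -> Omega -> 'M[R]_k) : Prop :=
  P 0 = P0 /\
  forall eps, 0 <= eps ->
    MRN_cocycle mu theta (P eps) /\
    {ae mu, forall w, opnorm1 (P eps 1%N w - P0 1%N w) <= eps}.

Definition invariant_distribution {k : nat} (mu : probability Omega R)
  (theta : Omega -> Omega) (P : nat -> Omega -> 'M[R]_k)
  (p : Omega -> 'cV[R]_k) : Prop :=
  (forall i, measurable_fun setT (fun w => p w i 0)) /\
  (forall w, Sigma1p (p w)) /\
  {ae mu, forall w, forall n, P n w *m p w = p (iter n theta w)}.

End MRN.

(* Along each orbit of θ the transition cocycle is a family [Q n z] of
   stochastic matrices indexed by integer positions.  In ℓ¹, stochastic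
   matrices are non-expanding and preserve Σ_1^+; what matters is how much
   they contract the hyperplane Σ_0 of zero-sum vectors.
   1. If backward products [Q n (-n)] contract Σ_0 arbitrarily well, the
      pull-back orbit of any probability vector is Cauchy; its limit is
      pull-back attracting and is transported by the cocycle, and forward
      contraction gives forward attraction (section [Pullback]).
   2. A synchronizing 0/1 block kills Σ_0; the perturbed cocycle stays within
      [n eps] of the deterministic one after [n] steps, so a perturbed
      synchronizing block of length [M] halves Σ_0 once [M eps <= 1/2], and
      recurring blocks yield backward and forward contraction.  The
      pull-back limit is within [s eps] of the image state of a
      synchronizing block of length [s] in the past.
   3. Some level [M] of the synchronization time has positive measure, so by
      ergodic recurrence almost every orbit meets it infinitely often in both
      time directions, while avoiding the null set where the almost-sure
      hypotheses fail.
   On such good points the invariant distribution [p eps] is the pull-back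
   limit; this gives the theorem with [eps1 = 1 / (2 (M + 1))]. *)

From HB Require Import structures.
From mathcomp Require Import all_boot all_order all_algebra.
From mathcomp Require Import all_classical all_reals all_analysis.
From mathcomp Require Import lra zify.
From mathcomp Require Import measurable_realfun.
Import Order.TTheory GRing.Theory Num.Theory.
Import numFieldNormedType.Exports.
Set Implicit Arguments.
Unset Strict Implicit.
Unset Printing Implicit Defensive.
Local Open Scope classical_set_scope.
Local Open Scope ring_scope.

Section L1Geometry.
Variables (R : realType) (k : nat).
Implicit Types (A B E : 'M[R]_k) (u v : 'cV[R]_k).

(* Sum of the coordinates: Σ_a is the level set [vsum v = a]. *)
Definition vsum v : R := \sum_(i < k) v i 0.

Definition contracts A (c : R) :=
  forall v, vsum v = 0 -> norm1 (A *m v) <= c * norm1 v.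

Lemma norm1_ge0 v : 0 <= norm1 v.
Proof. by apply: sumr_ge0 => i _. Qed.

Lemma norm1D u v : norm1 (u + v) <= norm1 u + norm1 v.
Proof.
rewrite /norm1 -big_split /=; apply: ler_sum => i _; rewrite mxE; exact: ler_normD.
Qed.

Lemma norm1N v : norm1 (- v) = norm1 v.
Proof. by apply: eq_bigr => i _; rewrite mxE normrN. Qed.

Lemma norm1B u v : norm1 (u - v) = norm1 (v - u).
Proof. by rewrite -norm1N opprB. Qed.

Lemma norm1_coord v i : `|v i 0| <= norm1 v.
Proof. by rewrite /norm1 (bigD1 i) //= lerDl; apply: sumr_ge0. Qed.

Lemma norm1_le0 v : norm1 v <= 0 -> v = 0.
Proof.
move=> h; apply/matrixP => i j; rewrite (ord1 j) mxE; apply/eqP.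
by rewrite -normr_le0; apply: le_trans h; exact: norm1_coord.
Qed.

Lemma opnorm1_ge0 A : 0 <= opnorm1 A.
Proof.
rewrite /opnorm1; elim/big_ind: _ => //= [x y hx hy|j _]; last exact: sumr_ge0.
by rewrite le_max hx.
Qed.

Lemma col_le_opnorm1 A j : \sum_(i < k) `|A i j| <= opnorm1 A.
Proof. exact: (le_bigmax 0 (fun j => \sum_(i < k) `|A i j|) j). Qed.

Lemma opnorm1_le A (c : R) :
  0 <= c -> (forall j, \sum_(i < k) `|A i j| <= c) -> opnorm1 A <= c.
Proof. by move=> c0 h; apply: bigmax_le => // j _; exact: h. Qed.

Lemma opnorm1_0 : opnorm1 (0 : 'M[R]_k) = 0.
Proof.
apply/eqP; rewrite eq_le opnorm1_ge0 andbT.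
by apply: opnorm1_le => // j; rewrite big1 // => i _; rewrite mxE normr0.
Qed.

Lemma norm1_mul A v : norm1 (A *m v) <= opnorm1 A * norm1 v.
Proof.
apply: (@le_trans _ _ (\sum_(i < k) \sum_(j < k) `|A i j| * `|v j 0|)).
  apply: ler_sum => i _; rewrite mxE.
  apply: (le_trans (ler_norm_sum _ _ _)); apply: ler_sum => j _.
  by rewrite normrM.
rewrite exchange_big /= mulr_sumr; apply: ler_sum => j _.
by rewrite -mulr_suml; apply: ler_wpM2r => //; exact: col_le_opnorm1.
Qed.

Lemma opnorm1_mul A B : opnorm1 (A *m B) <= opnorm1 A * opnorm1 B.
Proof.
apply: opnorm1_le => [|j]; first by rewrite mulr_ge0 // opnorm1_ge0.
have colE (C : 'M[R]_k) : \sum_(i < k) `|C i j| = norm1 (col j C).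
  by apply: eq_bigr => i _; rewrite mxE.
rewrite colE (_ : col j (A *m B) = A *m col j B); last first.
  by apply/matrixP => i z; rewrite !mxE; apply: eq_bigr => l _; rewrite mxE.
apply: le_trans (norm1_mul _ _) _.
by apply: ler_wpM2l; [exact: opnorm1_ge0 | rewrite -colE; exact: col_le_opnorm1].
Qed.

Lemma opnorm1D A B : opnorm1 (A + B) <= opnorm1 A + opnorm1 B.
Proof.
apply: opnorm1_le => [|j]; first by rewrite addr_ge0 // opnorm1_ge0.
apply: le_trans (lerD (col_le_opnorm1 A j) (col_le_opnorm1 B j)).
rewrite -big_split /=; apply: ler_sum => i _; rewrite mxE; exact: ler_normD.
Qed.

Lemma opnorm1_stochastic A : column_stochastic A -> opnorm1 A <= 1.
Proof.
move=> [A0 A1]; apply: opnorm1_le => // j.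
by rewrite -(A1 j) le_eqVlt; apply/orP; left; apply/eqP/eq_bigr => i _; rewrite ger0_norm.
Qed.

Lemma vsumB u v : vsum (u - v) = vsum u - vsum v.
Proof. by rewrite /vsum -sumrB; apply: eq_bigr => i _; rewrite !mxE. Qed.

Lemma vsum_stochastic A v : column_stochastic A -> vsum (A *m v) = vsum v.
Proof.
move=> [_ A1]; rewrite /vsum; under eq_bigr do rewrite mxE.
by rewrite exchange_big /=; apply: eq_bigr => j _; rewrite -mulr_suml A1 mul1r.
Qed.

Lemma Sigma1p_vsum v : Sigma1p v -> vsum v = 1.
Proof. by case. Qed.

Lemma Sigma1p_norm1 v : Sigma1p v -> norm1 v = 1.
Proof. by move=> [v1 v0]; rewrite -v1; apply: eq_bigr => i _; exact: ger0_norm. Qed.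

Lemma Sigma1p_stochastic A v : column_stochastic A -> Sigma1p v -> Sigma1p (A *m v).
Proof.
move=> hA hv; split; first by rewrite -/(vsum _) vsum_stochastic // Sigma1p_vsum.
move=> i; rewrite mxE; apply: sumr_ge0 => j _.
by apply: mulr_ge0; [case: hA | case: hv].
Qed.

Lemma Sigma1p_sub u v : Sigma1p u -> Sigma1p v ->
  vsum (u - v) = 0 /\ norm1 (u - v) <= 2.
Proof.
move=> hu hv; split; first by rewrite vsumB !Sigma1p_vsum // subrr.
by apply: le_trans (norm1D _ _) _; rewrite norm1N !Sigma1p_norm1 //; lra.
Qed.

Lemma contracts_weaken A (a b : R) : contracts A a -> a <= b -> contracts A b.
Proof.
by move=> hA ab v v0; apply: le_trans (hA v v0) _; apply: ler_wpM2r => //; exact: norm1_ge0.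
Qed.

Lemma contracts_Sigma1p A (c : R) u v : 0 <= c -> contracts A c ->
  Sigma1p u -> Sigma1p v -> norm1 (A *m u - A *m v) <= 2 * c.
Proof.
move=> c0 hA hu hv; have [uv0 uv2] := Sigma1p_sub hu hv.
rewrite -mulmxBr; apply: le_trans (hA _ uv0) _.
by rewrite mulrC; apply: ler_wpM2r.
Qed.

Lemma contracts_stochastic A : column_stochastic A -> contracts A 1.
Proof.
move=> sA v _; rewrite mul1r; apply: le_trans (norm1_mul A v) _.
by rewrite -[leRHS]mul1r; apply: ler_wpM2r; [exact: norm1_ge0 | exact: opnorm1_stochastic].
Qed.

Lemma contracts_mul A B (a b : R) : 0 <= a -> column_stochastic B ->
  contracts A a -> contracts B b -> contracts (A *m B) (a * b).
Proof.
move=> a0 sB hA hB v v0; rewrite -mulmxA.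
apply: le_trans (hA _ _) _; first by rewrite vsum_stochastic.
by rewrite -mulrA; apply: ler_wpM2l => //; exact: hB.
Qed.

Lemma contracts_near A E (c : R) : (forall v, vsum v = 0 -> E *m v = 0) ->
  opnorm1 (A - E) <= c -> contracts A c.
Proof.
move=> hE hc v v0; have -> : A *m v = (A - E) *m v by rewrite mulmxBl hE // subr0.
by apply: le_trans (norm1_mul _ _) _; apply: ler_wpM2r => //; exact: norm1_ge0.
Qed.

Lemma Sigma1p_evec (J : 'I_k) : Sigma1p (evec R J).
Proof.
split; last by move=> i; rewrite mxE; case: ifP.
rewrite (bigD1 J) //= big1 ?mxE ?eqxx ?addr0 // => i /negbTE h.
by rewrite mxE h.
Qed.

Lemma pick_evec (j0 J : 'I_k) : odflt j0 [pick i | evec R J i 0 == 1] = J.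
Proof.
case: pickP => [i /eqP|/(_ J)] /=; rewrite !mxE; last by rewrite eqxx eqxx.
by case: eqP => // _ /esym/eqP; rewrite oner_eq0.
Qed.

Definition zero_one A := forall i j, A i j = 0 \/ A i j = 1.
Definition colmap A (j : 'I_k) : 'I_k := odflt j [pick i | A i j == 1].
Definition synchronizes A := forall i j, colmap A i = colmap A j.

Lemma zero_one_colmap A : column_stochastic A -> zero_one A ->
  forall i j, A i j = (i == colmap A j)%:R.
Proof.
move=> [A0 A1] h01 i j; rewrite /colmap.
case: pickP => [i1 /eqP Ai1|Anone] /=; last first.
  have : \sum_(i < k) A i j = 0.
    by apply: big1 => i' _; case: (h01 i' j) => // e; move: (Anone i'); rewrite e eqxx.
  by rewrite A1 => /eqP; rewrite oner_eq0.
have others i' : i' != i1 -> A i' j = 0.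
  move=> ne; case: (h01 i' j) => // e1; exfalso.
  have := A1 j; rewrite (bigD1 i1) //= (bigD1 i') //= Ai1 e1 addrA.
  move=> /eqP; rewrite -subr_eq0 addrAC addrK => /eqP h.
  have : 0 < 1 + \sum_(i0 < k | (i0 != i1) && (i0 != i')) A i0 j.
    by apply: (@lt_le_trans _ _ 1) => //; rewrite lerDl; apply: sumr_ge0.
  by rewrite h ltxx.
by case: (eqVneq i i1) => [->|ne]; [rewrite Ai1 | rewrite others].
Qed.

Lemma synchronizes_mul A (J : 'I_k) v : column_stochastic A -> zero_one A ->
  synchronizes A -> A *m v = vsum v *: evec R (colmap A J).
Proof.
move=> sA h01 hA; apply/matrixP => i z; rewrite (ord1 z) !mxE /vsum mulr_suml.
apply: eq_bigr => j _; rewrite (zero_one_colmap sA h01) (hA j J) mulrC.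
by case: eqP.
Qed.

Lemma synchronizes_Sigma0 A v : column_stochastic A -> zero_one A ->
  synchronizes A -> vsum v = 0 -> A *m v = 0.
Proof.
move=> sA h01 hA v0; apply/matrixP => i j.
by rewrite (synchronizes_mul i v sA h01 hA) v0 scale0r.
Qed.

End L1Geometry.

Lemma eventually_ge (P : nat -> Prop) (n0 : nat) :
  (\forall n \near \oo, P n) -> exists n, (n0 <= n)%N /\ P n.
Proof.
case=> N _ hN; exists (maxn N n0); split; first exact: leq_maxr.
by apply: hN; rewrite /= leq_maxl.
Qed.

Lemma cvg0_eventually_le (R : realType) (y : nat -> R) : (forall n, 0 <= y n) ->
  (forall e, 0 < e -> exists n0, forall n, (n0 <= n)%N -> y n <= e) ->
  y @ \oo --> (0 : R).
Proof.
move=> y0 h; apply/cvgr0Pnorm_le => e e0.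
have [n0 hn0] := h e e0; exists n0 => // n /= hn.
by rewrite ger0_norm //; apply: hn0.
Qed.

Lemma half_pow_le (R : realType) (e : R) : 0 < e -> exists L : nat, (1/2 : R) ^+ L <= e.
Proof.
move=> e0; have cv : (GRing.exp (1/2 : R) : R ^nat) @ \oo --> 0.
  by apply: cvg_expr; rewrite ger0_norm; lra.
move/cvgr0Pnorm_le: cv => /(_ e e0) /(eventually_ge 0) [L [_ hL]].
by exists L; rewrite ger0_norm in hL; last by apply: exprn_ge0; lra.
Qed.

Lemma small_multiple (R : realType) (s : nat) (eps delta : R) :
  0 <= eps -> eps < delta / s.+1%:R -> s%:R * eps < delta.
Proof.
move=> eps_ge0; rewrite ltr_pdivlMr // -(natr1 s) => h.
have : 0 <= s%:R :> R by []; nra.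
Qed.

Section L1Convergence.
Variables (R : realType) (k : nat).
Implicit Types (A : 'M[R]_k) (x y : nat -> 'cV[R]_k) (l c : 'cV[R]_k).

Definition l1_cvg x l := forall e, 0 < e ->
  exists n0, forall n, (n0 <= n)%N -> norm1 (x n - l) <= e.

Definition l1_cauchy x := forall e, 0 < e ->
  exists n0, forall n m, (n0 <= n)%N -> (n0 <= m)%N -> norm1 (x n - x m) <= e.

(* The coordinatewise limit, meaningful for convergent sequences. *)
Definition vlim x : 'cV[R]_k := \col_i lim ((fun n => x n i 0) @ \oo).

Lemma l1_cauchy_coord x i : l1_cauchy x ->
  (fun n => x n i 0) @ \oo --> lim ((fun n => x n i 0) @ \oo).
Proof.
move=> h; apply/cauchy_cvgP/cauchy_exP => e e0.
have [n0 hn0] := h (e / 2) (divr_gt0 e0 (ltr0Sn _ 1)).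
exists (x n0 i 0); exists n0 => // n /= hn.
apply: (@le_lt_trans _ _ (e / 2)); last by rewrite ltr_pdivrMr // ltr_pMr // ltr1n.
by apply: le_trans (hn0 n0 n (leqnn _) hn); have := norm1_coord (x n0 - x n) i; rewrite !mxE.
Qed.

Lemma l1_cauchy_cvg x : l1_cauchy x -> l1_cvg x (vlim x).
Proof.
move=> h e e0; set e' := e / (k.+1)%:R.
have e'0 : 0 < e' by rewrite divr_gt0.
have [n0 hn0] := h e' e'0.
exists n0 => n hn.
have coord i : `|x n i 0 - vlim x i 0| <= e'.
  rewrite !mxE; apply/ler_addgt0Pr => d d0.
  move: (l1_cauchy_coord (i := i) h) => /cvgrPdist_lt /(_ d d0) /(eventually_ge n0) [m [hm hmd]].
  set l := lim _ in hmd *.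
  rewrite -(subrK (x m i 0) (x n i 0)) -addrA.
  apply: (le_trans (ler_normD _ _)); apply: lerD; last by rewrite distrC ltW.
  by apply: le_trans (hn0 n m hn hm); have := norm1_coord (x n - x m) i; rewrite !mxE.
apply: (@le_trans _ _ (\sum_(i < k) e')).
  by apply: ler_sum => i _; move: (coord i); rewrite !mxE.
rewrite sumr_const card_ord -mulr_natl /e' mulrA ler_pdivrMr // [_ * e]mulrC.
by apply: ler_wpM2l; [exact: ltW | rewrite ler_nat].
Qed.

Lemma l1_cvg_le x l c (b : R) n0 : l1_cvg x l ->
  (forall n, (n0 <= n)%N -> norm1 (x n - c) <= b) -> norm1 (l - c) <= b.
Proof.
move=> cv hb; apply/ler_addgt0Pr => e e0.
have [n1 hn1] := cv e e0; set n := maxn n0 n1.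
have -> : l - c = (x n - c) - (x n - l) by rewrite opprB [RHS]addrC addrA subrK.
apply: (le_trans (norm1D _ _)); rewrite norm1N; apply: lerD.
  by apply: hb; rewrite leq_maxl.
by apply: hn1; rewrite leq_maxr.
Qed.

Lemma l1_cvg_uniq x l l' : l1_cvg x l -> l1_cvg x l' -> l = l'.
Proof.
move=> h h'; apply/eqP; rewrite -subr_eq0; apply/eqP/norm1_le0.
apply/ler_addgt0Pr => e e0; rewrite add0r.
have [n1 hn1] := h' e e0; exact: (l1_cvg_le (n0 := n1) h).
Qed.

Lemma l1_cvg_shift x l a : l1_cvg x l -> l1_cvg (fun n => x (n + a)%N) l.
Proof.
move=> h e e0; have [n0 hn0] := h e e0; exists n0 => n hn.
by apply: hn0; apply: leq_trans hn (leq_addr _ _).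
Qed.

Lemma l1_cvg_eq x y l : (forall n, x n = y n) -> l1_cvg x l -> l1_cvg y l.
Proof. by move=> /funext <-. Qed.

Lemma l1_cvg_mul A x l : l1_cvg x l -> l1_cvg (fun n => A *m x n) (A *m l).
Proof.
move=> h e e0; have hp : 0 < opnorm1 A + 1 by have := opnorm1_ge0 A; lra.
have [n0 hn0] := h (e / (opnorm1 A + 1)) (divr_gt0 e0 hp).
exists n0 => n hn; rewrite -mulmxBr; apply: le_trans (norm1_mul _ _) _.
apply: (@le_trans _ _ ((opnorm1 A + 1) * (e / (opnorm1 A + 1)))).
  by apply: (ler_pM (opnorm1_ge0 A) (norm1_ge0 _)); [rewrite lerDl | exact: hn0].
by rewrite mulrC -mulrA mulVf ?mulr1 // gt_eqF.
Qed.

Lemma l1_cvg_Sigma1p x l : (forall n, Sigma1p (x n)) -> l1_cvg x l -> Sigma1p l.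
Proof.
move=> hx h; split.
  apply/eqP; rewrite -subr_eq0 -normr_le0; apply/ler_addgt0Pr => e e0; rewrite add0r.
  have [n0 hn0] := h e e0.
  rewrite -(Sigma1p_vsum (hx n0)) -/(vsum l) -normrN opprB -vsumB.
  apply: le_trans (hn0 n0 (leqnn _)); apply: le_trans (ler_norm_sum _ _ _) _.
  by apply: ler_sum => i _.
move=> i; apply/ler_addgt0Pr => e e0.
have [n0 hn0] := h e e0.
have h1 := hn0 n0 (leqnn _); have h2 := norm1_coord (x n0 - l) i; rewrite !mxE in h2.
have h3 := (proj2 (hx n0)) i; have h4 := ler_norm (x n0 i 0 - l i 0).
lra.
Qed.

End L1Convergence.

Section Pullback.
Variables (R : realType) (k : nat).

(* A stochastic cocycle along a single orbit, with positions in ℤ: [Q n z]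
   is the [n]-step transition matrix started at position [z]. *)
Record stochastic_cocycle (Q : nat -> int -> 'M[R]_k) : Prop := StochasticCocycle {
  cocycle_stochastic : forall n z, column_stochastic (Q n z);
  cocycle0 : forall z, Q 0 z = 1%:M;
  cocycleD : forall z m n, Q (m + n)%N z = Q m (z + n%:Z) *m Q n z }.

Variable Q : nat -> int -> 'M[R]_k.

Definition backward_contracting := forall c, 0 < c ->
  exists n0, forall n, (n0 <= n)%N -> contracts (Q n (- n%:Z)) c.

Definition forward_contracting := forall c, 0 < c ->
  exists n0, forall n, (n0 <= n)%N -> contracts (Q n 0) c.

Lemma forward_attracts q l : forward_contracting -> Sigma1p q -> Sigma1p l ->
  (fun n => norm1 (Q n 0 *m q - Q n 0 *m l)) @ \oo --> (0 : R).
Proof.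
move=> hfw hq hl; apply: cvg0_eventually_le => [n|e e0]; first exact: norm1_ge0.
have [n0 hn0] := hfw (e / 2) (divr_gt0 e0 (ltr0Sn _ 1)).
exists n0 => n hn; apply: le_trans (contracts_Sigma1p _ (hn0 n hn) hq hl) _ => //.
  exact: divr_ge0 (ltW e0) _.
by rewrite mulrC -mulrA mulVf ?mulr1.
Qed.

Hypothesis hQ : stochastic_cocycle Q.
Variable q0 : 'cV[R]_k.
Hypothesis hq0 : Sigma1p q0.

(* The pull-back orbit of [q0] and its limit, the candidate value at
   position 0 of the invariant distribution. *)
Definition pullback_seq n := Q n (- n%:Z) *m q0.
Definition pullback := vlim pullback_seq.

Lemma pullback_seq_Sigma1p n : Sigma1p (pullback_seq n).
Proof. exact: Sigma1p_stochastic (cocycle_stochastic hQ _ _) hq0. Qed.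

(* Running [d] more steps from further in the past amounts to replacing
   [q0] by another probability vector. *)
Lemma pullback_seqD n d :
  pullback_seq (n + d) = Q n (- n%:Z) *m (Q d (- (n + d)%N%:Z) *m q0).
Proof.
rewrite /pullback_seq mulmxA; congr (_ *m _).
have -> : - n%:Z = - (n + d)%N%:Z + d%:Z by lia.
by rewrite -(cocycleD hQ).
Qed.

Hypothesis hbw : backward_contracting.

Lemma pullback_cauchy : l1_cauchy pullback_seq.
Proof.
move=> e e0; have [n0 hn0] := hbw (divr_gt0 e0 (ltr0Sn _ 1)).
have tail n d : (n0 <= n)%N -> norm1 (pullback_seq (n + d) - pullback_seq n) <= e.
  move=> hn; rewrite pullback_seqD.
  apply: le_trans (contracts_Sigma1p _ (hn0 n hn) _ hq0) _.
  - exact: divr_ge0 (ltW e0) _.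
  - exact: Sigma1p_stochastic (cocycle_stochastic hQ _ _) hq0.
  by rewrite mulrC -mulrA mulVf ?mulr1.
exists n0 => n m hn hm; case: (leqP n m) => nm.
  by rewrite norm1B (_ : m = n + (m - n))%N ?tail //; lia.
by rewrite (_ : n = m + (n - m))%N ?tail //; lia.
Qed.

Lemma pullback_cvg : l1_cvg pullback_seq pullback.
Proof. exact: l1_cauchy_cvg pullback_cauchy. Qed.

Lemma pullback_coord_cvg i :
  (fun n => pullback_seq n i 0) @ \oo --> lim ((fun n => pullback_seq n i 0) @ \oo).
Proof. exact: l1_cauchy_coord pullback_cauchy. Qed.

Lemma pullback_Sigma1p : Sigma1p pullback.
Proof. exact: l1_cvg_Sigma1p pullback_seq_Sigma1p pullback_cvg. Qed.

Lemma pullback_attracts q : Sigma1p q ->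
  (fun n => norm1 (Q n (- n%:Z) *m q - pullback)) @ \oo --> (0 : R).
Proof.
move=> hq; apply: cvg0_eventually_le => [n|e e0]; first exact: norm1_ge0.
have e4 : 0 < e / 4 by lra.
have [n0 hn0] := hbw e4.
have [n1 hn1] := pullback_cvg e4.
exists (maxn n0 n1) => n; rewrite geq_max => /andP[hn hn'].
rewrite -(subrK (pullback_seq n) (Q n _ *m q)) -addrA.
apply: le_trans (norm1D _ _) _.
have := contracts_Sigma1p (ltW e4) (hn0 n hn) hq hq0.
have := hn1 n hn'; rewrite /pullback_seq; lra.
Qed.

Lemma pullback_shift (a : nat) l :
  l1_cvg (fun n => Q n (a%:Z - n%:Z) *m q0) l -> Q a 0 *m pullback = l.
Proof.
move=> h; apply: (l1_cvg_uniq (l1_cvg_mul (Q a 0) pullback_cvg)).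
apply: l1_cvg_eq (l1_cvg_shift a h) => n.
rewrite /pullback_seq mulmxA addnC (cocycleD hQ); congr (Q a _ *m Q n _ *m _); lia.
Qed.

End Pullback.

Section SynchronizedPerturbation.
Variables (R : realType) (k : nat) (Q Q0 : nat -> int -> 'M[R]_k) (eps : R).
Hypotheses (hQ : stochastic_cocycle Q) (hQ0 : stochastic_cocycle Q0).
Hypothesis Q0_zero_one : forall n z, zero_one (Q0 n z).
Hypothesis Q_near_Q0 : forall z, opnorm1 (Q 1 z - Q0 1 z) <= eps.

(* One-step errors of size [eps] add up to at most [n eps] after [n] steps,
   since stochastic matrices do not expand the ℓ¹ norm. *)
Lemma perturbation_bound n z : opnorm1 (Q n z - Q0 n z) <= n%:R * eps.
Proof.
elim: n z => [|n IH] z; first by rewrite !cocycle0 // subrr opnorm1_0 mul0r.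
rewrite -add1n !cocycleD //.
set A := Q 1 _; set A0 := Q0 1 _; set B := Q n z; set B0 := Q0 n z.
have -> : A *m B - A0 *m B0 = (A - A0) *m B + A0 *m (B - B0).
  by rewrite mulmxBl mulmxBr addrA subrK.
apply: le_trans (opnorm1D _ _) _.
have h1 := opnorm1_mul (A - A0) B; have h2 := opnorm1_mul A0 (B - B0).
have := Q_near_Q0 (z + n%:Z); have := IH z.
have := opnorm1_stochastic (cocycle_stochastic hQ n z).
have := opnorm1_stochastic (cocycle_stochastic hQ0 1 (z + n%:Z)).
have := opnorm1_ge0 (A - A0); have := opnorm1_ge0 (B - B0).
have := opnorm1_ge0 A0; have := opnorm1_ge0 B.
rewrite -/A -/A0 -/B -/B0 natrD mulrDl mul1r; nra.
Qed.

(* A synchronizing deterministic block kills Σ_0, so the nearby block of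
   the perturbed cocycle contracts Σ_0 by its distance [s eps]. *)
Lemma synchronizing_block s z :
  synchronizes (Q0 s z) -> contracts (Q s z) (s%:R * eps).
Proof.
move=> hs; apply: (contracts_near (E := Q0 s z)); last exact: perturbation_bound.
by move=> v; apply: synchronizes_Sigma0 (cocycle_stochastic hQ0 s z) _ hs.
Qed.

Lemma pullback_near_sync q0 s (J : 'I_k) : Sigma1p q0 -> backward_contracting Q ->
  synchronizes (Q0 s (- s%:Z)) ->
  norm1 (pullback Q q0 - evec R (colmap (Q0 s (- s%:Z)) J)) <= s%:R * eps.
Proof.
move=> hq0 hbw hs; apply: (l1_cvg_le (n0 := s) (pullback_cvg hQ hq0 hbw)) => m hm.
rewrite (_ : m = s + (m - s))%N; last by lia.
rewrite pullback_seqD //; set r := Q (m - s) _ *m q0.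
have hr : Sigma1p r by exact: Sigma1p_stochastic (cocycle_stochastic hQ _ _) hq0.
have -> : evec R (colmap (Q0 s (- s%:Z)) J) = Q0 s (- s%:Z) *m r.
  rewrite (synchronizes_mul J r (cocycle_stochastic hQ0 _ _) (Q0_zero_one _ _) hs).
  by rewrite Sigma1p_vsum // scale1r.
rewrite -mulmxBl; apply: le_trans (norm1_mul _ _) _.
by rewrite Sigma1p_norm1 // mulr1; exact: perturbation_bound.
Qed.

Variable M : nat.
Hypothesis M_eps : M%:R * eps <= 1/2.

(* Each synchronizing block of length [M] halves distances in Σ_0; if such
   blocks recur infinitely often in the past, backward products contract. *)
Lemma backward_halving :
  (forall m, exists s, (m <= s)%N /\ synchronizes (Q0 M (- s%:Z))) ->
  forall L, exists n0, forall n, (n0 <= n)%N -> contracts (Q n (- n%:Z)) ((1/2) ^+ L).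
Proof.
move=> recur; elim=> [|L [n0 IH]].
  by exists 0%N => n _; rewrite expr0; apply: contracts_stochastic (cocycle_stochastic hQ _ _).
have [s [hs sync]] := recur (n0 + M)%N.
exists s => n hn.
have block : Q M (- s%:Z) *m Q (n - s) (- n%:Z) = Q (M + (n - s)) (- n%:Z).
  by rewrite (cocycleD hQ); congr (Q M _ *m _); lia.
have split_past :
    Q n (- n%:Z) = Q (s - M) (- (s - M)%N%:Z) *m Q (M + (n - s)) (- n%:Z).
  have -> : - (s - M)%N%:Z = - n%:Z + (M + (n - s))%N%:Z by lia.
  by rewrite -(cocycleD hQ); congr Q; lia.
rewrite split_past -block exprSr -[_ * (1/2)]mulr1 -mulrA.
apply: contracts_mul.
- by apply: exprn_ge0; lra.
- by rewrite block; exact: cocycle_stochastic.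
- by apply: IH; lia.
apply: contracts_mul; [lra | exact: cocycle_stochastic | |].
  exact: contracts_weaken (synchronizing_block sync) M_eps.
exact: contracts_stochastic (cocycle_stochastic hQ _ _).
Qed.

Lemma forward_halving :
  (forall m, exists t, (m <= t)%N /\ synchronizes (Q0 M t%:Z)) ->
  forall L, exists n0, forall n, (n0 <= n)%N -> contracts (Q n 0) ((1/2) ^+ L).
Proof.
move=> recur; elim=> [|L [n0 IH]].
  by exists 0%N => n _; rewrite expr0; apply: contracts_stochastic (cocycle_stochastic hQ _ _).
have [t [ht sync]] := recur n0.
exists (t + M)%N => n hn.
have block : Q M t%:Z *m Q t 0 = Q (M + t) 0 by rewrite (cocycleD hQ) add0r.
have split_future : Q n 0 = Q (n - (t + M)) (t + M)%N%:Z *m Q (M + t) 0.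
  have -> : (t + M)%N%:Z = 0 + (M + t)%N%:Z by lia.
  by rewrite -(cocycleD hQ); congr Q; lia.
rewrite split_future -block exprS -[(1/2) * _]mul1r.
apply: contracts_mul; [lra | | exact: contracts_stochastic (cocycle_stochastic hQ _ _) |].
  by rewrite block; exact: cocycle_stochastic.
apply: contracts_mul; [lra | exact: cocycle_stochastic | | exact: IH ht].
exact: contracts_weaken (synchronizing_block sync) M_eps.
Qed.

Lemma backward_contracting_of_recurrence :
  (forall m, exists s, (m <= s)%N /\ synchronizes (Q0 M (- s%:Z))) ->
  backward_contracting Q.
Proof.
move=> /backward_halving halving c c0; have [L hL] := half_pow_le c0.
have [n0 hn0] := halving L.
by exists n0 => n hn; exact: contracts_weaken (hn0 n hn) hL.
Qed.

Lemma forward_contracting_of_recurrence :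
  (forall m, exists t, (m <= t)%N /\ synchronizes (Q0 M t%:Z)) ->
  forward_contracting Q.
Proof.
move=> /forward_halving halving c c0; have [L hL] := half_pow_le c0.
have [n0 hn0] := halving L.
by exists n0 => n hn; exact: contracts_weaken (hn0 n hn) hL.
Qed.

End SynchronizedPerturbation.

Section Recurrence.
Variables (R : realType) (d : measure_display) (Omega : measurableType d).
Variable mu : probability Omega R.
Implicit Types (f : Omega -> Omega) (A N : set Omega).

Lemma measurable_preimage f A :
  measurable_fun setT f -> measurable A -> measurable (f @^-1` A).
Proof. by move=> mf mA; rewrite -[f @^-1` _]setTI; exact: mf. Qed.

Lemma measurable_iter f n : measurable_fun setT f -> measurable_fun setT (iter n f).
Proof.
move=> mf; elim: n => [|n IH] /=; first exact: measurable_id.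
exact: measurableT_comp mf IH.
Qed.

Definition measure_preserving f :=
  forall A, measurable A -> mu (f @^-1` A) = mu A.

Definition ergodic f :=
  forall A, measurable A -> f @^-1` A = A -> mu A = 0%E \/ mu A = 1%E.

Lemma measure_preserving_iter f n :
  measurable_fun setT f -> measure_preserving f -> measure_preserving (iter n f).
Proof.
move=> mf pf; elim: n => [|n IH] A mA //=.
rewrite (_ : _ @^-1` A = iter n f @^-1` (f @^-1` A)) //.
by rewrite IH ?pf //; exact: measurable_preimage.
Qed.

Lemma negligible_preimage f N : measurable_fun setT f -> measure_preserving f ->
  mu.-negligible N -> mu.-negligible (f @^-1` N).
Proof.
move=> mf pf [N' [mN' N'0 NN']]; exists (f @^-1` N'); split.
- exact: measurable_preimage.
- by rewrite pf.
- by move=> w /NN'.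
Qed.

Lemma probability_full A : measurable A -> mu.-negligible (~` A) -> mu A = 1%E.
Proof.
move=> mA nA; have : mu (~` A) = 0%E by apply/(@negligibleP _ _ _ mu _ (measurableC mA)).
rewrite probability_setC //.
have := probability_le1 mu mA; have := measure_ge0 mu A.
case: (mu A) => [r| |] //=; rewrite ?lee_fin => r0 r1.
by move=> /eqP; rewrite -EFinB eqe subr_eq0 => /eqP <-.
Qed.

Definition infinitely_often f A := \bigcap_m \bigcup_n (iter (n + m) f @^-1` A).

Lemma ergodic_recurrence f A : measurable_fun setT f -> measure_preserving f ->
  ergodic f -> measurable A -> (0 < mu A)%E ->
  measurable (infinitely_often f A) /\ mu.-negligible (~` infinitely_often f A).
Proof.
move=> mf pf ef mA A0.
pose F m := \bigcap_n (iter (n + m) f @^-1` (~` A)).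
have mF m : measurable (F m).
  by apply: bigcapT_measurable => n; apply: measurable_preimage (measurableC mA);
    exact: measurable_iter.
have complE : ~` infinitely_often f A = \bigcup_m F m.
  rewrite /infinitely_often setC_bigcap; apply: eq_bigcupr => m _.
  by rewrite setC_bigcup.
have mU : measurable (\bigcup_m F m) by exact: bigcupT_measurable.
split; first by rewrite -[infinitely_often f A]setCK complE; exact: measurableC.
rewrite complE.
have ndF : nondecreasing_seq F.
  move=> m m' hm; rewrite subsetEset => w Fw n _.
  by have := Fw (n + (m' - m))%N I; rewrite /= (_ : n + (m' - m) + m = n + m')%N //; lia.
have invariant : f @^-1` (\bigcup_m F m) = \bigcup_m F m.
  apply/seteqP; split => w /= [m _ Fm].
    by exists m.+1 => // n _; have := Fm n I; rewrite /= -iterSr addnS.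
  exists m => // n _; have := ndF m m.+1 (leqnSn m); rewrite subsetEset.
  by move=> /(_ w Fm n I); rewrite /= addnS iterSr.
have F_le m : (mu (F m) <= mu (~` A))%E.
  apply: (@le_trans _ _ (mu (iter m f @^-1` (~` A)))).
    apply: le_measure; rewrite ?inE //; last by move=> w /(_ 0%N I).
    by apply: measurable_preimage (measurableC mA); exact: measurable_iter.
  by rewrite (measure_preserving_iter _ mf pf) //; exact: measurableC.
have U_le : (mu (\bigcup_m F m) <= mu (~` A))%E.
  by apply: (cvge_to_le (nondecreasing_cvg_mu mF mU ndF)); apply: nearW.
apply/negligibleP => //; case: (ef _ mU invariant) => // U1; exfalso.
move: U_le A0; rewrite U1 probability_setC //.
by case: (mu A) => [r| |] //=; rewrite ?lee_fin ?lte_fin; lra.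
Qed.

End Recurrence.

Section InvertibleOrbits.
Variables (R : realType) (d : measure_display) (Omega : measurableType d).
Variable mu : probability Omega R.
Variables theta theta_inv : Omega -> Omega.
Hypotheses (m_theta : measurable_fun setT theta) (m_theta_inv : measurable_fun setT theta_inv).
Hypotheses (thetaK : cancel theta theta_inv) (theta_invK : cancel theta_inv theta).
Hypothesis theta_pres : measure_preserving mu theta.

Definition orbit (w : Omega) (z : int) : Omega :=
  match z with Posz n => iter n theta w | Negz n => iter n.+1 theta_inv w end.

Lemma orbitS w z : orbit w (z + 1) = theta (orbit w z).
Proof.
case: z => [n|[|n]]; first by rewrite (_ : Posz n + 1 = Posz n.+1) //; lia.
  by rewrite (_ : Negz 0 + 1 = Posz 0) /= ?theta_invK //; lia.
by rewrite (_ : Negz n.+1 + 1 = Negz n) /= ?theta_invK //; lia.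
Qed.

Lemma iter_orbit n w z : iter n theta (orbit w z) = orbit w (z + n%:Z).
Proof.
elim: n => [|n IH]; first by rewrite addr0.
by rewrite iterS IH -orbitS; congr orbit; lia.
Qed.

Lemma iter_inv_orbit n w z : iter n theta_inv (orbit w z) = orbit w (z - n%:Z).
Proof.
elim: n => [|n IH]; first by rewrite subr0.
rewrite iterS IH -[in LHS](subrK 1 (z - n%:Z)) orbitS thetaK; congr orbit; lia.
Qed.

Lemma orbitN n w : orbit w (- n%:Z) = iter n theta_inv w.
Proof. by rewrite -[in RHS](_ : orbit w 0 = w) // iter_inv_orbit sub0r. Qed.

Lemma orbit_orbit w a z : orbit (orbit w a) z = orbit w (a + z).
Proof.
case: z => n; first by rewrite /= iter_orbit.
by rewrite [LHS](iter_inv_orbit n.+1); congr orbit; lia.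
Qed.

Lemma measurable_orbit z : measurable_fun setT (fun w => orbit w z).
Proof. by case: z => n; exact: measurable_iter. Qed.

Lemma theta_inv_pres : measure_preserving mu theta_inv.
Proof.
move=> A mA; rewrite -theta_pres; last exact: measurable_preimage.
by congr (mu _); apply/seteqP; split => w /=; rewrite thetaK.
Qed.

Lemma theta_inv_ergodic : ergodic mu theta -> ergodic mu theta_inv.
Proof.
move=> erg A mA hA; apply: erg => //; apply/seteqP; split => w /=.
  move=> Aw; have : (theta_inv @^-1` A) (theta w) by rewrite hA.
  by rewrite /= thetaK.
by move=> Aw; rewrite -hA /= thetaK.
Qed.

Definition orbit_avoids (N : set Omega) : set Omega :=
  \bigcap_n ((iter n theta @^-1` (~` N)) `&` (iter n theta_inv @^-1` (~` N))).

Lemma orbit_avoidsP N w : orbit_avoids N w <-> forall z, ~ N (orbit w z).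
Proof.
split=> [h [] n|h n _]; first by have [] := h n I.
  by have [] := h n.+1 I.
by split=> /=; [exact: (h (Posz n)) | rewrite -orbitN; exact: h].
Qed.

Lemma measurable_orbit_avoids N : measurable N -> measurable (orbit_avoids N).
Proof.
move=> mN; apply: bigcapT_measurable => n.
by apply: measurableI; apply: measurable_preimage (measurableC mN); exact: measurable_iter.
Qed.

Lemma orbit_avoids_ae N : mu.-negligible N -> mu.-negligible (~` orbit_avoids N).
Proof.
move=> N0; rewrite /orbit_avoids setC_bigcap; apply: negligible_bigcup => n.
rewrite setCI !preimage_setC !setCK; apply: negligibleU;
  apply: negligible_preimage N0; try exact: measurable_iter.
  exact: measure_preserving_iter.
by apply: measure_preserving_iter => //; exact: theta_inv_pres.
Qed.

Lemma orbit_avoids_shift N w a : orbit_avoids N w -> orbit_avoids N (iter a theta w).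
Proof.
move=> /orbit_avoidsP h; apply/orbit_avoidsP => z.
by rewrite -[iter a theta w]/(orbit w a) orbit_orbit.
Qed.

Lemma infinitely_often_shift A w a :
  infinitely_often theta A w -> infinitely_often theta A (iter a theta w).
Proof.
move=> h m _; have [n _ hn] := h (m + a)%N I; exists n => //=.
by rewrite -iterD (_ : n + m + a = n + (m + a))%N //; lia.
Qed.

Lemma infinitely_often_inv_shift A w a :
  infinitely_often theta_inv A w -> infinitely_often theta_inv A (iter a theta w).
Proof.
move=> h m _; have [n _ hn] := h m I; exists (n + a)%N => //=.
rewrite -[iter a theta w]/(orbit w a) iter_inv_orbit.
by rewrite (_ : _ - _ = - (n + m)%N%:Z) ?orbitN //; lia.
Qed.

End InvertibleOrbits.

Section MarkovPerturbationOfSynchronizedDRN.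
Variables (R : realType) (d : measure_display) (Omega : measurableType d).
Variable mu : probability Omega R.
Variables theta theta_inv : Omega -> Omega.
Variable k : nat.
Variables (P0 : nat -> Omega -> 'M[R]_k) (P : R -> nat -> Omega -> 'M[R]_k).
Hypothesis k_gt0 : (0 < k)%N.
Hypotheses (m_theta : measurable_fun setT theta) (m_theta_inv : measurable_fun setT theta_inv).
Hypotheses (thetaK : cancel theta theta_inv) (theta_invK : cancel theta_inv theta).
Hypotheses (theta_pres : measure_preserving mu theta) (theta_erg : ergodic mu theta).
Hypothesis P0_DRN : DRN_cocycle mu theta P0.
Variable Nsync : Omega -> nat.
Hypothesis m_Nsync : forall m, measurable (Nsync @^-1` [set m]).
Hypothesis Nsync_ae : {ae mu, forall w, forall i j n, (Nsync w <= n)%N ->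
  DRN_map P0 n w i = DRN_map P0 n w j}.
Hypothesis P_perturbation : forall eps, 0 <= eps ->
  MRN_cocycle mu theta (P eps) /\
  {ae mu, forall w, opnorm1 (P eps 1%N w - P0 1%N w) <= eps}.

Local Notation orb := (orbit theta theta_inv).

Definition cocycle_at (Q : nat -> Omega -> 'M[R]_k) (w : Omega) :=
  [/\ forall n, column_stochastic (Q n w), Q 0%N w = 1%:M &
      forall m n, Q (m + n)%N w = Q m (iter n theta w) *m Q n w].

Definition regular (eps : R) (w : Omega) := [/\ cocycle_at (P eps) w,
  opnorm1 (P eps 1%N w - P0 1%N w) <= eps, cocycle_at P0 w,
  forall n, zero_one (P0 n w) &
  forall n, (Nsync w <= n)%N -> synchronizes (P0 n w)].

Lemma regular_ae eps : {ae mu, forall w, 0 <= eps -> regular eps w}.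
Proof.
have [[_ P0_ae] P0_01] := P0_DRN.
have [eps_ge0|eps_lt0] := pselect (0 <= eps); last by apply: aeW => w /eps_lt0.
have [[_ P_ae] P_step] := P_perturbation eps_ge0.
near=> w => _; split.
- exact: (near P_ae w).
- exact: (near P_step w).
- exact: (near P0_ae w).
- by move=> n i j; exact: (near P0_01 w).
- by move=> n hn i j; exact: (near Nsync_ae w).
Unshelve. all: by end_near.
Qed.

Definition bad (eps : R) : set Omega := sval (cid (regular_ae eps)).

Lemma bad_null eps : measurable (bad eps) /\ mu.-negligible (bad eps).
Proof.
have [mN N0 _] := svalP (cid (regular_ae eps)).
by split=> //; exists (bad eps); split.
Qed.

Lemma regular_off_bad eps w : 0 <= eps -> ~ bad eps w -> regular eps w.
Proof.
move=> eps_ge0 Nw; have [_ _ sub] := svalP (cid (regular_ae eps)).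
by apply: contrapT => hw; apply: Nw; apply: sub => /(_ eps_ge0).
Qed.

Definition sync_by (m : nat) := [set w | (Nsync w <= m)%N].

Lemma measurable_sync_by m : measurable (sync_by m).
Proof.
elim: m => [|m IH].
  by rewrite (_ : sync_by 0 = Nsync @^-1` [set 0%N]) //; apply/seteqP;
    split => w /=; rewrite /sync_by /= leqn0 => /eqP.
rewrite (_ : sync_by m.+1 = sync_by m `|` Nsync @^-1` [set m.+1]).
  exact: measurableU.
apply/seteqP; split => w; rewrite /sync_by /=.
  by rewrite leq_eqVlt ltnS => /orP [/eqP ->|]; [right|left].
by case => [/leqW|->].
Qed.

Lemma sync_level_exists : exists m, (0 < mu (sync_by m))%E.
Proof.
apply: contrapT => none.
have null m : mu.-negligible (sync_by m).
  apply/negligibleP; first exact: measurable_sync_by.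
  apply/eqP; rewrite eq_le measure_ge0 andbT leNgt; apply/negP => pos.
  by apply: none; exists m.
have : mu.-negligible (\bigcup_m sync_by m) by exact: negligible_bigcup.
rewrite (_ : \bigcup_m sync_by m = setT); last first.
  by apply/seteqP; split => // w _; exists (Nsync w) => //; rewrite /sync_by /=.
move=> /(@negligibleP _ _ _ mu _ measurableT) muT0.
by have := probability_setT mu; rewrite muT0 => /eqP; rewrite eq_sym onee_eq0.
Qed.

Definition M : nat := sval (cid sync_level_exists).

Lemma sync_by_M_pos : (0 < mu (sync_by M))%E.
Proof. exact: svalP (cid sync_level_exists). Qed.

Definition good (eps : R) : set Omega :=
  orbit_avoids theta theta_inv (bad eps) `&`
  infinitely_often theta (sync_by M) `&` infinitely_often theta_inv (sync_by M).

Let future_recurrence := ergodic_recurrence m_theta theta_pres theta_erg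
  (measurable_sync_by M) sync_by_M_pos.
Let past_recurrence := ergodic_recurrence m_theta_inv
  (theta_inv_pres m_theta_inv thetaK theta_pres) (theta_inv_ergodic thetaK theta_erg)
  (measurable_sync_by M) sync_by_M_pos.

Lemma measurable_good eps : measurable (good eps).
Proof.
apply: measurableI; last exact: past_recurrence.1.
apply: measurableI; last exact: future_recurrence.1.
exact: measurable_orbit_avoids (bad_null eps).1.
Qed.

Lemma good_ae eps : mu.-negligible (~` good eps).
Proof.
rewrite /good !setCI; apply: negligibleU; last exact: past_recurrence.2.
apply: negligibleU; last exact: future_recurrence.2.
exact: orbit_avoids_ae (bad_null eps).2.
Qed.

Lemma good_shift eps w a : good eps w -> good eps (iter a theta w).
Proof.
case=> [[avoid fut] past]; split; [split|].
- exact: orbit_avoids_shift.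
- exact: infinitely_often_shift.
- exact: infinitely_often_inv_shift.
Qed.

Lemma good_regular eps w z : 0 <= eps -> good eps w -> regular eps (orb w z).
Proof.
move=> eps_ge0 [[/(orbit_avoidsP thetaK theta_invK) avoid _] _].
exact: regular_off_bad eps_ge0 (avoid z).
Qed.

Definition Qorb (eps : R) (w : Omega) : nat -> int -> 'M[R]_k :=
  fun n z => P eps n (orb w z).
Definition Q0orb (w : Omega) : nat -> int -> 'M[R]_k := fun n z => P0 n (orb w z).

Lemma stochastic_cocycle_orbit (Q : nat -> Omega -> 'M[R]_k) w :
  (forall z, cocycle_at Q (orb w z)) -> stochastic_cocycle (fun n z => Q n (orb w z)).
Proof.
move=> hQ; split=> [n z|z|z m n]; have [Qs Q0 QD] := hQ z => //.
by rewrite QD iter_orbit.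
Qed.

Section GoodOrbit.
Variables (eps : R) (w : Omega).
Hypotheses (eps_ge0 : 0 <= eps) (good_w : good eps w).

Let reg z := good_regular z eps_ge0 good_w.

Lemma Qorb_cocycle : stochastic_cocycle (Qorb eps w).
Proof. by apply: (stochastic_cocycle_orbit (Q := P eps)) => z; case: (reg z). Qed.

Lemma Q0orb_cocycle : stochastic_cocycle (Q0orb w).
Proof. by apply: (stochastic_cocycle_orbit (Q := P0)) => z; case: (reg z). Qed.

Lemma Q0orb_zero_one n z : zero_one (Q0orb w n z).
Proof. by case: (reg z) => _ _ _ h01 _; exact: h01. Qed.

Lemma Qorb_step z : opnorm1 (Qorb eps w 1 z - Q0orb w 1 z) <= eps.
Proof. by case: (reg z). Qed.

Lemma Q0orb_sync n z : (Nsync (orb w z) <= n)%N -> synchronizes (Q0orb w n z).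
Proof. by case: (reg z) => _ _ _ _; apply. Qed.

Lemma Q0orb_recurrent_past m :
  exists s, (m <= s)%N /\ synchronizes (Q0orb w M (- s%:Z)).
Proof.
have [[_ _] past] := good_w; have [n _ hn] := past m I.
exists (n + m)%N; split; first exact: leq_addl.
by apply: Q0orb_sync; rewrite orbitN.
Qed.

Lemma Q0orb_recurrent_future m :
  exists t, (m <= t)%N /\ synchronizes (Q0orb w M t%:Z).
Proof.
have [[_ fut] _] := good_w; have [n _ hn] := fut m I.
by exists (n + m)%N; split; [exact: leq_addl | exact: Q0orb_sync].
Qed.

Hypothesis M_eps : M%:R * eps <= 1/2.

Lemma Qorb_backward : backward_contracting (Qorb eps w).
Proof.
exact: (backward_contracting_of_recurrence Qorb_cocycle Q0orb_cocycle
  Q0orb_zero_one Qorb_step M_eps Q0orb_recurrent_past).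
Qed.

Lemma Qorb_forward : forward_contracting (Qorb eps w).
Proof.
exact: (forward_contracting_of_recurrence Qorb_cocycle Q0orb_cocycle
  Q0orb_zero_one Qorb_step M_eps Q0orb_recurrent_future).
Qed.

End GoodOrbit.

Lemma Q0orb_sync_past eps w : 0 <= eps -> good eps w ->
  exists s, synchronizes (Q0orb w s (- s%:Z)).
Proof.
move=> eps_ge0 good_w; have [[_ _] past] := good_w; have [n _ hn] := past M I.
exists (n + M)%N; apply: (Q0orb_sync eps_ge0 good_w).
by rewrite orbitN //; apply: leq_trans hn _; exact: leq_addl.
Qed.

Definition j0 : 'I_k := Ordinal k_gt0.

Definition pb (eps : R) (w : Omega) : 'cV[R]_k := pullback (Qorb eps w) (evec R j0).

Lemma pb_near_sync eps w s : 0 <= eps -> M%:R * eps <= 1/2 -> good eps w ->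
  synchronizes (Q0orb w s (- s%:Z)) ->
  norm1 (pb eps w - evec R (colmap (Q0orb w s (- s%:Z)) j0)) <= s%:R * eps.
Proof.
move=> eps_ge0 M_eps good_w; rewrite /pb; apply: (pullback_near_sync (Qorb_cocycle eps_ge0 good_w)
  (Q0orb_cocycle eps_ge0 good_w) (Q0orb_zero_one eps_ge0 good_w)
  (Qorb_step eps_ge0 good_w) j0 (Sigma1p_evec R j0) (Qorb_backward eps_ge0 good_w M_eps)).
Qed.

(* The unperturbed limit state [J w], made measurable by reading it off
   the unperturbed pull-back limit. *)
Definition limit0 (w : Omega) : 'cV[R]_k := if w \in good 0 then pb 0 w else evec R j0.

Definition J (w : Omega) : 'I_k := odflt j0 [pick i | limit0 w i 0 == 1].

Lemma pb0_sync w s : good 0 w -> synchronizes (Q0orb w s (- s%:Z)) ->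
  pb 0 w = evec R (J w) /\ J w = colmap (Q0orb w s (- s%:Z)) j0.
Proof.
move=> good_w sync.
have M0 : M%:R * 0 <= 1/2 :> R by rewrite mulr0; lra.
have := pb_near_sync (lexx 0) M0 good_w sync.
rewrite mulr0 => /norm1_le0/eqP; rewrite subr_eq0 => /eqP pbE.
have JE : J w = colmap (Q0orb w s (- s%:Z)) j0.
  by rewrite /J /limit0 (mem_set good_w) pbE pick_evec.
by rewrite JE.
Qed.

Lemma limit0_evec w : limit0 w = evec R (J w).
Proof.
rewrite /J /limit0; case: ifPn => [/set_mem good_w|_]; last by rewrite pick_evec.
by have [s sync] := Q0orb_sync_past (lexx 0) good_w; rewrite (pb0_sync good_w sync).1 pick_evec.
Qed.

Definition p (eps : R) (w : Omega) : 'cV[R]_k :=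
  if w \in good eps then pb eps w else evec R (J w).

Lemma p0 w : good 0 w -> p 0 w = evec R (J w).
Proof.
by move=> good_w; rewrite /p (mem_set good_w) -limit0_evec /limit0 (mem_set good_w).
Qed.

Lemma p_near_J eps w s : 0 <= eps -> M%:R * eps <= 1/2 -> good 0 w ->
  synchronizes (Q0orb w s (- s%:Z)) -> norm1 (p eps w - evec R (J w)) <= s%:R * eps.
Proof.
move=> eps_ge0 M_eps good0_w sync; rewrite /p; case: ifPn => [/set_mem good_w|_].
  by rewrite (pb0_sync good0_w sync).2; exact: pb_near_sync.
by rewrite subrr (_ : norm1 0 = 0) ?mulr_ge0 // /norm1 big1 // => i _; rewrite mxE normr0.
Qed.

Lemma measurable_in_good eps : measurable_fun setT (fun w => w \in good eps).
Proof.
apply: (measurable_fun_bool true); rewrite setTI.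
rewrite (_ : _ @^-1` _ = good eps); first exact: measurable_good.
by apply/seteqP; split => w /=; [move/set_mem | move/mem_set].
Qed.

(* The pull-back limit is a pointwise limit of measurable functions on the
   measurable set [good eps], hence measurable once glued to any measurable
   function off that set. *)
Lemma measurable_pb eps i (h : Omega -> R) : 0 <= eps -> M%:R * eps <= 1/2 ->
  measurable_fun setT h ->
  measurable_fun setT (fun w => if w \in good eps then pb eps w i 0 else h w).
Proof.
move=> eps_ge0 M_eps mh; have [[mP _] _] := P_perturbation eps_ge0.
have m_seq n : measurable_fun setT (fun w => pullback_seq (Qorb eps w) (evec R j0) n i 0).
  rewrite (_ : (fun w => _) = fun w => \sum_(j < k) P eps n (orb w (- n%:Z)) i j *
    evec R j0 j 0); last by apply/funext => w; rewrite mxE.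
  apply: measurable_sum => j; apply: measurable_funM => //.
  exact: measurableT_comp (mP n i j) (measurable_orbit _ _ _).
apply: measurable_fun_if => //; first exact: measurable_in_good.
  rewrite setTI (_ : _ @^-1` _ = good eps); last first.
    by apply/seteqP; split => w /=; [move/set_mem | move/mem_set].
  apply: (measurable_fun_cvg
    (h := fun n w => pullback_seq (Qorb eps w) (evec R j0) n i 0)) => [n|w good_w].
    exact: measurable_funS (m_seq n).
  rewrite /pb /pullback /vlim mxE.
  exact: (pullback_coord_cvg (Qorb_cocycle eps_ge0 good_w) (Sigma1p_evec R j0)
    (Qorb_backward eps_ge0 good_w M_eps)).
exact: measurable_funS mh.
Qed.

Lemma measurable_limit0 i : measurable_fun setT (fun w => limit0 w i 0).
Proof.
have M0 : M%:R * 0 <= 1/2 :> R by rewrite mulr0; lra.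
rewrite (_ : (fun w => _) =
  fun w => if w \in good 0 then pb 0 w i 0 else evec R j0 i 0).
  exact: measurable_pb (lexx 0) M0 (measurable_cst _).
by apply/funext => w; rewrite /limit0; case: ifP.
Qed.

Lemma measurable_J j : measurable (J @^-1` [set j]).
Proof.
rewrite (_ : J @^-1` _ = (fun w => limit0 w j 0) @^-1` [set 1]); last first.
  apply/seteqP; split => w /=; rewrite limit0_evec mxE; first by move=> ->; rewrite eqxx.
  by case: eqP => // _ /esym/eqP; rewrite oner_eq0.
rewrite -[_ @^-1` _]setTI; apply: measurable_limit0 => //; exact: measurable_set1.
Qed.

Lemma measurable_p eps i : 0 <= eps -> M%:R * eps <= 1/2 ->
  measurable_fun setT (fun w => p eps w i 0).
Proof.
move=> eps_ge0 M_eps; rewrite (_ : (fun w => _) =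
  fun w => if w \in good eps then pb eps w i 0 else limit0 w i 0).
  exact: measurable_pb eps_ge0 M_eps (measurable_limit0 i).
by apply/funext => w; rewrite /p limit0_evec; case: ifP.
Qed.

Section GoodPoint.
Variables (eps : R) (w : Omega).
Hypotheses (eps_ge0 : 0 <= eps) (M_eps : M%:R * eps <= 1/2).

Lemma p_Sigma1p : Sigma1p (p eps w).
Proof.
rewrite /p; case: ifPn => [/set_mem good_w|_]; last exact: Sigma1p_evec.
exact: (pullback_Sigma1p (Qorb_cocycle eps_ge0 good_w) (Sigma1p_evec R j0)
  (Qorb_backward eps_ge0 good_w M_eps)).
Qed.

Hypothesis good_w : good eps w.

Let Qorb_w := Qorb_cocycle eps_ge0 good_w.
Let Qorb_w_backward := Qorb_backward eps_ge0 good_w M_eps.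

Lemma p_invariant n : P eps n w *m p eps w = p eps (iter n theta w).
Proof.
have good_nw := good_shift n good_w.
rewrite /p (mem_set good_w) (mem_set good_nw).
apply: (pullback_shift Qorb_w (Sigma1p_evec R j0) Qorb_w_backward).
apply: l1_cvg_eq (pullback_cvg (Qorb_cocycle eps_ge0 good_nw) (Sigma1p_evec R j0)
  (Qorb_backward eps_ge0 good_nw M_eps)) => m.
by rewrite /pullback_seq /Qorb -[iter n theta w]/(orb w n) orbit_orbit.
Qed.

Lemma p_pullback_attracts q : Sigma1p q ->
  (fun n => norm1 (P eps n (iter n theta_inv w) *m q - p eps w)) @ \oo --> (0 : R).
Proof.
move=> hq; rewrite /p (mem_set good_w).
rewrite (_ : (fun n => _) = fun n => norm1 (Qorb eps w n (- n%:Z) *m q - pb eps w)).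
  exact: (pullback_attracts Qorb_w (Sigma1p_evec R j0) Qorb_w_backward hq).
by apply/funext => n; rewrite /Qorb orbitN.
Qed.

Lemma p_forward_attracts q : Sigma1p q ->
  (fun n => norm1 (P eps n w *m q - p eps (iter n theta w))) @ \oo --> (0 : R).
Proof.
move=> hq; rewrite (_ : (fun n => _) =
  fun n => norm1 (Qorb eps w n 0 *m q - Qorb eps w n 0 *m p eps w)).
  exact: (forward_attracts (Qorb_forward eps_ge0 good_w M_eps) hq p_Sigma1p).
by apply/funext => n; rewrite -p_invariant.
Qed.

End GoodPoint.

Lemma ae_good eps (Q : Omega -> Prop) :
  (forall w, good eps w -> Q w) -> {ae mu, forall w, Q w}.
Proof. by move=> hQ; apply: negligibleS (good_ae eps) => w /= nQw good_w; apply/nQw/hQ. Qed.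

Lemma uniformly_synchronized_points : uniformly_synchronized mu P0 ->
  exists (Nu : nat) (A : set Omega), [/\ measurable A, mu A = 1%E &
    forall w, A w -> good 0 w /\ synchronizes (Q0orb w Nu (- Nu%:Z))].
Proof.
case=> Nu [U [mU U0 subU]].
pose A := good 0 `&` iter Nu theta_inv @^-1` (~` U).
have mA : measurable A.
  apply: measurableI (measurable_good 0) (measurable_preimage _ (measurableC mU)).
  exact: measurable_iter.
exists Nu, A; split => //.
  apply: probability_full mA _; rewrite setCI preimage_setC setCK.
  apply: negligibleU (good_ae 0) (negligible_preimage _ _ _).
  - exact: measurable_iter.
  - apply: measure_preserving_iter => //; exact: theta_inv_pres.
  - by exists U; split.
move=> w [good_w Uw]; split => // i j; rewrite /Q0orb orbitN //.
by apply: contrapT => nsync; apply: Uw; apply: subU => /(_ i j Nu (leqnn _)).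
Qed.

(* Below [eps1] the block length [M] makes perturbed blocks contracting. *)
Definition eps1 : R := (2 * M.+1%:R)^-1.

Lemma eps1_gt0 : 0 < eps1.
Proof. by rewrite invr_gt0 mulr_gt0. Qed.

Lemma M_eps_small eps : 0 <= eps -> eps < eps1 -> M%:R * eps <= 1/2.
Proof.
move=> eps_ge0; rewrite /eps1 -div1r ltr_pdivlMr ?mulr_gt0 // -(natr1 M) => h.
have : 0 <= M%:R :> R by []; nra.
Qed.


Lemma p_close_to_J eps w s delta : good 0 w -> synchronizes (Q0orb w s (- s%:Z)) ->
  0 <= eps -> eps < delta / s.+1%:R -> eps < eps1 ->
  norm1 (p eps w - evec R (J w)) < delta.
Proof.
move=> good_w sync eps_ge0 eps_delta /(M_eps_small eps_ge0) M_eps.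
exact: le_lt_trans (p_near_J eps_ge0 M_eps good_w sync) (small_multiple eps_ge0 eps_delta).
Qed.

Theorem invariant_distributions_of_perturbed_synchronized_DRN :
  exists (eps1 : R) (p : R -> Omega -> 'cV[R]_k),
    0 < eps1 /\
    (forall eps, 0 <= eps -> eps < eps1 ->
       [/\ invariant_distribution mu theta (P eps) (p eps),
           (forall q : 'cV[R]_k, Sigma1p q ->
              {ae mu, forall w,
                 (fun n => norm1 (P eps n (iter n theta_inv w) *m q - p eps w))
                   @ \oo --> (0 : R)}) &
           (forall q : 'cV[R]_k, Sigma1p q ->
              {ae mu, forall w,
                 (fun n => norm1 (P eps n w *m q - p eps (iter n theta w)))
                   @ \oo --> (0 : R)})]) /\
    exists J : Omega -> 'I_k,
      (forall j, measurable (J @^-1` [set j])) /\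
      {ae mu, forall w,
         p 0 w = evec R (J w) /\
         (forall delta : R, 0 < delta -> exists eta : R, 0 < eta /\
            forall eps, 0 <= eps -> eps < eta -> eps < eps1 ->
              norm1 (p eps w - evec R (J w)) < delta)} /\
      (uniformly_synchronized mu P0 ->
         exists A : set Omega, measurable A /\ mu A = 1%E /\
           forall delta : R, 0 < delta -> exists eta : R, 0 < eta /\
             forall eps w, A w -> 0 <= eps -> eps < eta -> eps < eps1 ->
               norm1 (p eps w - evec R (J w)) < delta).
Proof.
exists eps1, p; split; first exact: eps1_gt0.
split.
  move=> eps eps_ge0 /(M_eps_small eps_ge0) M_eps.
  have ae_eps := ae_good (eps := eps).
  split; first split.
  - by move=> i; exact: measurable_p.
  - split; first by move=> w; exact: p_Sigma1p.
    by apply: ae_eps => w good_w n; exact: (p_invariant eps_ge0 M_eps good_w).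
  - move=> q hq; apply: ae_eps => w good_w.
    exact: (p_pullback_attracts eps_ge0 M_eps good_w).
  - move=> q hq; apply: ae_eps => w good_w.
    exact: (p_forward_attracts eps_ge0 M_eps good_w).
exists J; split; first exact: measurable_J.
split.
  apply: (ae_good (eps := 0)) => w good_w; split; first exact: p0.
  have [s sync] := Q0orb_sync_past (lexx 0) good_w.
  move=> delta delta_gt0; exists (delta / s.+1%:R); split; first by rewrite divr_gt0.
  by move=> eps; exact: (p_close_to_J good_w sync).
case/uniformly_synchronized_points => Nu [A [mA A1 hA]].
exists A; split => //; split => // delta delta_gt0.
exists (delta / Nu.+1%:R); split; first by rewrite divr_gt0.
by move=> eps w /hA [good_w sync]; exact: (p_close_to_J good_w sync).
Qed.

End MarkovPerturbationOfSynchronizedDRN.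

Theorem theoremA (R : realType) (d : measure_display) (Omega : measurableType d)
  (mu : probability Omega R) (theta theta_inv : Omega -> Omega) (k : nat)
  (P0 : nat -> Omega -> 'M[R]_k) (P : R -> nat -> Omega -> 'M[R]_k) :
  (2 <= k)%N ->
  @standard_borel R d Omega ->
  metric_dynamical_system mu theta theta_inv ->
  DRN_cocycle mu theta P0 ->
  synchronized mu P0 ->
  markov_perturbation mu theta P0 P ->
  exists (eps1 : R) (p : R -> Omega -> 'cV[R]_k),
    0 < eps1 /\
    (forall eps, 0 <= eps -> eps < eps1 ->
       [/\ invariant_distribution mu theta (P eps) (p eps),
           (* (i) pull-back attraction *)
           (forall q : 'cV[R]_k, Sigma1p q ->
              {ae mu, forall w,
                 (fun n => norm1 (P eps n (iter n theta_inv w) *m q - p eps w))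
                   @ \oo --> (0 : R)}) &
           (* (ii) forward attraction *)
           (forall q : 'cV[R]_k, Sigma1p q ->
              {ae mu, forall w,
                 (fun n => norm1 (P eps n w *m q - p eps (iter n theta w)))
                   @ \oo --> (0 : R)})]) /\
    (* (iii) continuity at eps = 0 *)
    exists J : Omega -> 'I_k,
      (forall j, measurable (J @^-1` [set j])) /\
      {ae mu, forall w,
         p 0 w = evec R (J w) /\
         (forall delta : R, 0 < delta -> exists eta : R, 0 < eta /\
            forall eps, 0 <= eps -> eps < eta -> eps < eps1 ->
              norm1 (p eps w - evec R (J w)) < delta)} /\
      (* uniform convergence under uniform synchronization *)
      (uniformly_synchronized mu P0 ->
         exists A : set Omega, measurable A /\ mu A = 1%E /\
           forall delta : R, 0 < delta -> exists eta : R, 0 < eta /\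
             forall eps w, A w -> 0 <= eps -> eps < eta -> eps < eps1 ->
               norm1 (p eps w - evec R (J w)) < delta).
Proof.
move=> k_ge2 _ [m_theta m_theta_inv [thetaK theta_invK] pres erg] P0_DRN
  [Nsync [m_Nsync Nsync_ae]] [_ P_perturbation].
exact: (invariant_distributions_of_perturbed_synchronized_DRN (ltnW k_ge2)
  m_theta m_theta_inv thetaK theta_invK pres erg P0_DRN m_Nsync Nsync_ae P_perturbation).
Qed.
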